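(* Let $C$ be a copula, and write $C_{2|1}(v|u)=\partial C(u,v)/\partial u$ and $C_{1|2}(u|v)=\partial C(u,v)/\partial v$. Provided the partial derivatives and limits appearing below exist, the following hold. For $p,q\in(0,1)$: $$\lambda^C(q|p)=\tfrac12\lim_{t\to0^+}\big[C_{2|1}(q+t|p+t)-C_{2|1}(q-t|p+t)+C_{2|1}(q+t|p-t)-C_{2|1}(q-t|p-t)+C_{1|2}(p+t|q+t)-C_{1|2}(p-t|q+t)+C_{1|2}(p+t|q-t)-C_{1|2}(p-t|q-t)\big].$$ For $p\in(0,1)$, $q=0$: $\lambda^C(0|p)=\tfrac12\lim_{t\to0^+}[C_{2|1}(t|p+t)+C_{2|1}(t|p-t)+C_{1|2}(p+t|t)-C_{1|2}(p-t|t)]$. For $p\in(0,1)$, $q=1$: $\lambda^C(1|p)=1-\tfrac12\lim_{t\to0^+}[C_{2|1}(1-t|p+t)+C_{2|1}(1-t|p-t)-C_{1|2}(p+t|1-t)+C_{1|2}(p-t|1-t)]$. For $p=0$, $q\in(0,1)$: $\lambda^C(q|0)=\lim_{t\to0^+}[C_{2|1}(q+t|t)-C_{2|1}(q-t|t)+C_{1|2}(t|q+t)+C_{1|2}(t|q-t)]$. For $p=1$, $q\in(0,1)$: $\lambda^C(q|1)=2-\lim_{t\to0^+}[C_{1|2}(1-t|q+t)+C_{1|2}(1-t|q-t)-C_{2|1}(q+t|1-t)+C_{2|1}(q-t|1-t)]$. For $p=0$, $q=1$: $\lambda^C(1|0)=1-\lim_{t\to0^+}[C_{2|1}(1-t|t)-C_{1|2}(t|1-t)]$.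 For $q=0$, $p=1$: $\lambda^C(0|1)=1-\lim_{t\to0^+}[C_{1|2}(1-t|t)-C_{2|1}(t|1-t)]$.
   Context: A copula is a bivariate distribution function on $[0,1]^2$ with uniform$(0,1)$ margins. For a copula $C$ and $p,q\in[0,1]$, the $(p,q)$-quantile dependence coefficient is $\lambda^C(q|p)=\lim_{t\to0^+}\frac{V_C([(p-t)^+,(p+t)^-]\times[(q-t)^+,(q+t)^-])}{(p+t)^- - (p-t)^+}$ when the limit exists, where $a^+=\max(a,0)$, $a^-=1-(1-a)^+$, and $V_C([u_1,u_2]\times[v_1,v_2])=C(u_2,v_2)-C(u_2,v_1)-C(u_1,v_2)+C(u_1,v_1)$. *)

From Stdlib Require Import Reals.
From Coquelicot Require Import Coquelicot.
Open Scope R_scope.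

Definition posp (a : R) : R := Rmax a 0.
Definition negm (a : R) : R := 1 - posp (1 - a).

Definition in01 (x : R) : Prop := 0 <= x <= 1.

Definition VC (C : R -> R -> R) (u1 u2 v1 v2 : R) : R :=
  C u2 v2 - C u2 v1 - C u1 v2 + C u1 v1.

(* A copula: a function on [0,1]^2 (values outside are irrelevant),
   grounded, with uniform margins, and 2-increasing. *)
Definition is_copula (C : R -> R -> R) : Prop :=
  (forall u, in01 u -> C u 0 = 0 /\ C 0 u = 0 /\ C u 1 = u /\ C 1 u = u) /\
  (forall u1 u2 v1 v2, in01 u1 -> in01 u2 -> in01 v1 -> in01 v2 ->
     u1 <= u2 -> v1 <= v2 -> 0 <= VC C u1 u2 v1 v2).

Definition C21 (C : R -> R -> R) (v u : R) : R := Derive (fun x => C x v) u.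
Definition C12 (C : R -> R -> R) (u v : R) : R := Derive (fun y => C u y) v.
Definition ex_C21 (C : R -> R -> R) (v u : R) : Prop := ex_derive (fun x => C x v) u.
Definition ex_C12 (C : R -> R -> R) (u v : R) : Prop := ex_derive (fun y => C u y) v.

(* The ratio whose limit as t -> 0+ defines lambda^C(q|p) *)
Definition lam_ratio (C : R -> R -> R) (p q t : R) : R :=
  VC C (posp (p - t)) (negm (p + t)) (posp (q - t)) (negm (q + t))
  / (negm (p + t) - posp (p - t)).

Definition qdc_is (C : R -> R -> R) (p q l : R) : Prop :=
  filterlim (lam_ratio C p q) (at_right 0) (locally l).

Definition lim0r (f : R -> R) (l : R) : Prop :=
  filterlim f (at_right 0) (locally l).

Definition near0r (P : R -> Prop) : Prop :=
  exists d, 0 < d /\ forall t, 0 < t < d -> P t.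

(* Let g(t) be the C-volume of the window [(p-t)^+, (p+t)^-] x [(q-t)^+, (q+t)^-]. Each edge
   of the window either moves at unit speed or is stuck on the boundary of the unit square,
   g(0) = 0, and g is Lipschitz because a copula is. Since C is 2-increasing, the frame added
   when the window grows by h has volume at least the sum of its four side strips, and the
   frame removed when it shrinks by h has volume at most that sum; each strip is h times a
   difference of partial derivatives of C plus o(h). So the lower right and upper left Dini
   derivatives of g at t are bounded below and above by the corresponding sum S(t) of
   partial-derivative differences, and integrating over [0, t] gives g(t)/t -> lim S.
   Substituting the boundary values C_{2|1}(0|u) = 0, C_{2|1}(1|u) = 1 and their transposes
   makes S an affine function of the bracket of the statement; dividing by the width of the
   p-window, 2t inside and t at an endpoint, gives each of the seven formulas. *)

From Stdlib Require Import Reals Lra Classical.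
From Coquelicot Require Import Coquelicot.
Open Scope R_scope.

Lemma near0r_at_right (P : R -> Prop) : near0r P <-> at_right 0 P.
Proof.
  split.
  - intros [d [Hd HP]]. exists (mkposreal d Hd). intros t Ht Ht0. apply HP.
    change (Rabs (t - 0) < d) in Ht. rewrite Rminus_0_r, Rabs_pos_eq in Ht; lra.
  - intros [d HP]. exists d. split; [apply cond_pos|]. intros t Ht. apply HP; [|lra].
    change (Rabs (t - 0) < d). rewrite Rminus_0_r, Rabs_pos_eq; lra.
Qed.

Lemma near0r_and (P Q : R -> Prop) :
  near0r P -> near0r Q -> near0r (fun t => P t /\ Q t).
Proof. rewrite !near0r_at_right. apply filter_and. Qed.

Lemma near0r_mono (P Q : R -> Prop) :
  (forall t, 0 < t -> P t -> Q t) -> near0r P -> near0r Q.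
Proof. intros HPQ [d [Hd HP]]. exists d. split; auto. intros t Ht. apply HPQ, HP; lra. Qed.

Lemma near0r_lt (d : R) : 0 < d -> near0r (fun t => t < d).
Proof. intros Hd. exists d. split; auto. intros t Ht. lra. Qed.

Lemma lim0r_near (f : R -> R) (l : R) :
  lim0r f l <-> forall e, 0 < e -> near0r (fun t => Rabs (f t - l) < e).
Proof.
  unfold lim0r. rewrite filterlim_locally. split.
  - intros H e He. apply near0r_at_right, (H (mkposreal e He)).
  - intros H e. apply near0r_at_right, (H e (cond_pos e)).
Qed.

Lemma lim0r_ext_near (f g : R -> R) (l : R) :
  lim0r f l -> near0r (fun t => f t = g t) -> lim0r g l.
Proof. intros Hf H. revert Hf. apply filterlim_ext_loc, near0r_at_right, H. Qed.

Lemma lim0r_affine (f : R -> R) (l a b : R) :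
  lim0r f l -> lim0r (fun t => a + b * f t) (a + b * l).
Proof.
  intros Hf. apply (filterlim_comp _ _ _ f (fun y => a + b * y) _ (locally l)); auto.
  apply (ex_derive_continuous (fun y => a + b * y)). auto_derive. auto.
Qed.

(** * Integrating Dini derivatives *)

Definition lipschitz_on (K a b : R) (g : R -> R) : Prop :=
  forall x y, a <= x <= b -> a <= y <= b -> Rabs (g x - g y) <= K * Rabs (x - y).

Definition right_dini_lb (g : R -> R) (m x : R) : Prop :=
  forall e, 0 < e -> near0r (fun h => (m - e) * h <= g (x + h) - g x).

Definition left_dini_ub (g : R -> R) (M x : R) : Prop :=
  forall e, 0 < e -> near0r (fun h => g x - g (x - h) <= (M + e) * h).

Lemma lipschitz_on_ge0 (K a b : R) (g : R -> R) : a < b -> lipschitz_on K a b g -> 0 <= K.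
Proof.
  intros Hab Hg. specialize (Hg a b ltac:(lra) ltac:(lra)).
  rewrite (Rabs_left (a - b)) in Hg by lra. pose proof (Rabs_pos (g a - g b)). nra.
Qed.

Lemma right_dini_lb_le (g : R -> R) (m m' x : R) :
  m' <= m -> right_dini_lb g m x -> right_dini_lb g m' x.
Proof.
  intros Hm Hg e He. generalize (Hg e He). apply near0r_mono. intros h Hh H. nra.
Qed.

Lemma left_dini_ub_le (g : R -> R) (M M' x : R) :
  M <= M' -> left_dini_ub g M x -> left_dini_ub g M' x.
Proof.
  intros HM Hg e He. generalize (Hg e He). apply near0r_mono. intros h Hh H. nra.
Qed.

Lemma lipschitz_on_le_of_left_approx (phi : R -> R) (K a b s c : R) :
  0 <= K -> lipschitz_on K a b phi -> a <= s <= b ->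
  (forall w, 0 < w -> exists x, a <= x <= s /\ s - w < x /\ c <= phi x) ->
  c <= phi s.
Proof.
  intros HK Hphi Hs Happ. apply Rle_plus_epsilon. intros eps Heps.
  set (w := eps / (K + 1)).
  assert (Hw : (K + 1) * w = eps) by (unfold w; field; lra).
  assert (Hw0 : 0 < w) by (unfold w; apply Rdiv_lt_0_compat; lra).
  destruct (Happ w Hw0) as [x [Hx [Hsx Hcx]]].
  pose proof (Hphi s x ltac:(lra) ltac:(lra)) as Hlip.
  rewrite (Rabs_pos_eq (s - x)) in Hlip by lra. apply Rabs_le_between in Hlip.
  assert (K * (s - x) <= K * w) by (apply Rmult_le_compat_l; lra).
  lra.
Qed.

(* Sup argument: the set of [x] with [phi a <= phi] on [[a, x]] is closed by
   continuity, and the local hypothesis pushes it past any of its points below [b]. *)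
Lemma right_locally_nondecr_le (phi : R -> R) (K a b : R) :
  a < b -> lipschitz_on K a b phi ->
  (forall x, a <= x < b -> near0r (fun h => phi x <= phi (x + h))) ->
  phi a <= phi b.
Proof.
  intros Hab Hphi Hloc. pose proof (lipschitz_on_ge0 K a b phi Hab Hphi) as HK.
  set (E := fun x => a <= x <= b /\ forall y, a <= y <= x -> phi a <= phi y).
  assert (Ea : E a) by (split; [lra | intros y Hy; replace y with a by lra; lra]).
  assert (Eb : bound E) by (exists b; intros x [Hx _]; lra).
  destruct (completeness E Eb (ex_intro _ a Ea)) as [s [Hub Hlub]].
  assert (Has : a <= s) by (apply Hub; auto).
  assert (Hsb : s <= b) by (apply Hlub; intros x [Hx _]; lra).
  assert (Happrox : forall y, y < s -> exists x, E x /\ y < x).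
  { intros y Hy. apply NNPP. intros Hn. enough (s <= y) by lra.
    apply Hlub. intros x Ex. apply Rnot_lt_le. intros Hyx. apply Hn. eauto. }
  assert (Hs : phi a <= phi s).
  { apply (lipschitz_on_le_of_left_approx phi K a b); auto.
    intros w Hw. destruct (Happrox (s - w)) as [x [[Hx HEx] Hsx]]; [lra|].
    assert (x <= s) by (apply Hub; split; auto).
    exists x. repeat split; try lra. apply HEx. lra. }
  assert (Hle : forall y, a <= y <= s -> phi a <= phi y).
  { intros y Hy. destruct (Req_dec y s) as [->|Hne]; auto.
    destruct (Happrox y) as [x [[_ Hx] Hyx]]; [lra|]. apply Hx. lra. }
  assert (Hsb' : s = b).
  { destruct (Req_dec s b) as [|Hne]; auto. exfalso.
    destruct (Hloc s ltac:(lra)) as [eta [Heta Hh]].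
    set (h := Rmin (eta / 2) (b - s)).
    assert (0 < h) by (apply Rmin_glb_lt; lra).
    assert (h <= eta / 2) by apply Rmin_l. assert (h <= b - s) by apply Rmin_r.
    assert (Eh : E (s + h)).
    { split; [lra|]. intros y Hy. destruct (Rle_dec y s); [apply Hle; lra|].
      specialize (Hh (y - s) ltac:(lra)). replace (s + (y - s)) with y in Hh by ring.
      specialize (Hle s ltac:(lra)). lra. }
    specialize (Hub _ Eh). lra. }
  subst s. exact Hs.
Qed.

Lemma right_dini_lb_integrate (g : R -> R) (K m a b : R) :
  a < b -> lipschitz_on K a b g -> (forall x, a <= x < b -> right_dini_lb g m x) ->
  m * (b - a) <= g b - g a.
Proof.
  intros Hab Hg Hd.
  assert (Main : forall e, 0 < e -> (m - e) * (b - a) <= g b - g a).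
  { intros e He.
    enough (g a - (m - e) * a <= g b - (m - e) * b) by lra.
    apply (right_locally_nondecr_le (fun x => g x - (m - e) * x) (K + Rabs (m - e))); auto.
    - intros x y Hx Hy.
      replace (g x - (m - e) * x - (g y - (m - e) * y))
        with ((g x - g y) + - ((m - e) * (x - y))) by ring.
      eapply Rle_trans; [apply Rabs_triang|]. rewrite Rabs_Ropp, Rabs_mult.
      specialize (Hg x y Hx Hy). lra.
    - intros x Hx. generalize (Hd x Hx e He). apply near0r_mono. intros h _ H. lra. }
  apply Rle_plus_epsilon. intros eps Heps.
  specialize (Main (eps / (b - a)) ltac:(apply Rdiv_lt_0_compat; lra)).
  replace ((m - eps / (b - a)) * (b - a)) with (m * (b - a) - eps) in Main by (field; lra).
  lra.
Qed.

Lemma right_dini_lb_integrate_open (g : R -> R) (K m a b : R) :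
  a < b -> lipschitz_on K a b g -> (forall x, a < x < b -> right_dini_lb g m x) ->
  m * (b - a) <= g b - g a.
Proof.
  intros Hab Hg Hd. pose proof (lipschitz_on_ge0 K a b g Hab Hg) as HK.
  pose proof (Rabs_pos m) as Hm.
  apply Rle_plus_epsilon. intros eps Heps.
  set (w := eps / (K + Rabs m + 1)).
  assert (Hw : (K + Rabs m + 1) * w = eps) by (unfold w; field; lra).
  assert (0 < w) by (unfold w; apply Rdiv_lt_0_compat; lra).
  set (a' := a + Rmin ((b - a) / 2) w).
  assert (0 < Rmin ((b - a) / 2) w) by (apply Rmin_glb_lt; lra).
  assert (Rmin ((b - a) / 2) w <= (b - a) / 2) by apply Rmin_l.
  assert (Rmin ((b - a) / 2) w <= w) by apply Rmin_r.
  assert (Hb : m * (b - a') <= g b - g a').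
  { apply (right_dini_lb_integrate g K); unfold a' in *; [lra | | intros; apply Hd; lra].
    intros x y Hx Hy. apply Hg; lra. }
  pose proof (Hg a' a ltac:(unfold a'; lra) ltac:(lra)) as Ha.
  rewrite (Rabs_pos_eq (a' - a)) in Ha by (unfold a'; lra). apply Rabs_le_between in Ha.
  assert (K * (a' - a) <= K * w) by (apply Rmult_le_compat_l; unfold a'; lra).
  assert (m * (a' - a) <= Rabs m * w).
  { apply (Rle_trans _ (Rabs m * (a' - a))).
    - apply Rmult_le_compat_r; [unfold a'; lra | apply Rle_abs].
    - apply Rmult_le_compat_l; unfold a'; lra. }
  lra.
Qed.

Lemma left_dini_ub_integrate_open (g : R -> R) (K M a b : R) :
  a < b -> lipschitz_on K a b g -> (forall x, a < x < b -> left_dini_ub g M x) ->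
  g b - g a <= M * (b - a).
Proof.
  intros Hab Hg Hd.
  enough (- M * (- a - - b) <= g (- - a) - g (- - b)) by (rewrite !Ropp_involutive in *; lra).
  apply (right_dini_lb_integrate_open (fun y => g (- y)) K); [lra | |].
  - intros x y Hx Hy. replace (x - y) with (- (- x - - y)) by ring.
    rewrite Rabs_Ropp. apply Hg; lra.
  - intros x Hx e He. generalize (Hd (- x) ltac:(lra) e He). apply near0r_mono.
    intros h _ H. replace (- (x + h)) with (- x - h) by ring. lra.
Qed.

Lemma lim0r_ratio_of_dini (g S : R -> R) (K d L : R) :
  0 < d -> g 0 = 0 -> lipschitz_on K 0 d g ->
  (forall x, 0 < x < d -> right_dini_lb g (S x) x /\ left_dini_ub g (S x) x) ->
  lim0r S L -> lim0r (fun t => g t / t) L.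
Proof.
  intros Hd Hg0 Hg HS. rewrite !lim0r_near. intros HL eps Heps.
  apply (near0r_mono (fun t => (forall x, 0 < x < t -> Rabs (S x - L) < eps / 2) /\ t < d)).
  - intros t Ht [Hnear Htd].
    assert (Hgt : lipschitz_on K 0 t g) by (intros x y Hx Hy; apply Hg; lra).
    pose proof (right_dini_lb_integrate_open g K (L - eps / 2) 0 t Ht Hgt) as Hlo.
    pose proof (left_dini_ub_integrate_open g K (L + eps / 2) 0 t Ht Hgt) as Hhi.
    assert (Hb : (L - eps / 2) * t <= g t <= (L + eps / 2) * t).
    { rewrite Hg0, !Rminus_0_r in *. split.
      - apply Hlo. intros x Hx. specialize (Hnear x Hx). apply Rabs_lt_between' in Hnear.
        apply (right_dini_lb_le g (S x)); [lra | apply HS; lra].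
      - apply Hhi. intros x Hx. specialize (Hnear x Hx). apply Rabs_lt_between' in Hnear.
        apply (left_dini_ub_le g (S x)); [lra | apply HS; lra]. }
    replace (g t / t - L) with ((g t - L * t) / t) by (field; lra).
    rewrite Rabs_div, (Rabs_pos_eq t) by lra.
    apply Rlt_div_l; [lra|]. apply Rabs_lt_between. nra.
  - destruct (HL (eps / 2) ltac:(lra)) as [d1 [Hd1 H1]].
    exists (Rmin d1 d). split; [apply Rmin_glb_lt; auto|].
    intros t Ht. pose proof (Rmin_l d1 d). pose proof (Rmin_r d1 d).
    split; [intros x Hx; apply H1 |]; lra.
Qed.

Definition swap_uv (C : R -> R -> R) : R -> R -> R := fun u v => C v u.

Lemma VC_swap_uv (C : R -> R -> R) (u1 u2 v1 v2 : R) :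
  VC (swap_uv C) v1 v2 u1 u2 = VC C u1 u2 v1 v2.
Proof. unfold VC, swap_uv. ring. Qed.

Lemma is_copula_swap_uv (C : R -> R -> R) : is_copula C -> is_copula (swap_uv C).
Proof.
  intros [Hb Hv]. split.
  - intros u Hu. destruct (Hb u Hu) as (? & ? & ? & ?). unfold swap_uv. auto.
  - intros u1 u2 v1 v2 **. rewrite VC_swap_uv. auto.
Qed.

Lemma copula_incr_u (C : R -> R -> R) (v x y : R) : is_copula C ->
  in01 v -> in01 x -> in01 y -> x <= y -> 0 <= C y v - C x v <= y - x.
Proof.
  intros HC Hv Hx Hy Hxy. destruct HC as [Hb Hinc].
  assert (i0 : in01 0) by (unfold in01; lra). assert (i1 : in01 1) by (unfold in01; lra).
  pose proof (Hinc x y 0 v Hx Hy i0 Hv Hxy (proj1 Hv)) as Hlow.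
  pose proof (Hinc x y v 1 Hx Hy Hv i1 Hxy (proj2 Hv)) as Hhigh.
  destruct (Hb x Hx) as (? & _ & ? & _). destruct (Hb y Hy) as (? & _ & ? & _).
  unfold VC in *. lra.
Qed.

Lemma copula_lipschitz_u (C : R -> R -> R) (u1 u2 v : R) : is_copula C ->
  in01 u1 -> in01 u2 -> in01 v -> Rabs (C u1 v - C u2 v) <= Rabs (u1 - u2).
Proof.
  intros HC H1 H2 Hv. destruct (Rle_dec u1 u2).
  - pose proof (copula_incr_u C v u1 u2 HC Hv H1 H2 r).
    rewrite Rabs_minus_sym, (Rabs_minus_sym u1), !Rabs_pos_eq; lra.
  - pose proof (copula_incr_u C v u2 u1 HC Hv H2 H1 ltac:(lra)). rewrite !Rabs_pos_eq; lra.
Qed.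

Lemma copula_lipschitz (C : R -> R -> R) (u1 u2 v1 v2 : R) : is_copula C ->
  in01 u1 -> in01 u2 -> in01 v1 -> in01 v2 ->
  Rabs (C u1 v1 - C u2 v2) <= Rabs (u1 - u2) + Rabs (v1 - v2).
Proof.
  intros HC Hu1 Hu2 Hv1 Hv2.
  replace (C u1 v1 - C u2 v2) with ((C u1 v1 - C u2 v1) + (C u2 v1 - C u2 v2)) by ring.
  eapply Rle_trans; [apply Rabs_triang|].
  pose proof (copula_lipschitz_u C u1 u2 v1 HC Hu1 Hu2 Hv1).
  pose proof (copula_lipschitz_u (swap_uv C) v1 v2 u2 (is_copula_swap_uv C HC) Hv1 Hv2 Hu2).
  unfold swap_uv in *. lra.
Qed.

Lemma VC_lipschitz (C : R -> R -> R) (a b c d a' b' c' d' : R) : is_copula C ->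
  in01 a -> in01 b -> in01 c -> in01 d -> in01 a' -> in01 b' -> in01 c' -> in01 d' ->
  Rabs (VC C a b c d - VC C a' b' c' d')
    <= 2 * (Rabs (a - a') + Rabs (b - b') + Rabs (c - c') + Rabs (d - d')).
Proof.
  intros HC Ha Hb Hc Hd Ha' Hb' Hc' Hd'.
  pose proof (copula_lipschitz C b b' d d' HC Hb Hb' Hd Hd') as Hbd.
  pose proof (copula_lipschitz C b b' c c' HC Hb Hb' Hc Hc') as Hbc.
  pose proof (copula_lipschitz C a a' d d' HC Ha Ha' Hd Hd') as Had.
  pose proof (copula_lipschitz C a a' c c' HC Ha Ha' Hc Hc') as Hac.
  apply Rabs_le_between in Hbd, Hbc, Had, Hac.
  apply Rabs_le_between. unfold VC. lra.
Qed.

Lemma locally_in01 (u : R) : 0 < u < 1 -> locally u in01.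
Proof.
  intros Hu. assert (Hm : 0 < Rmin u (1 - u)) by (apply Rmin_glb_lt; lra).
  exists (mkposreal _ Hm). intros y Hy. change (Rabs (y - u) < Rmin u (1 - u)) in Hy.
  pose proof (Rmin_l u (1 - u)). pose proof (Rmin_r u (1 - u)).
  apply Rabs_lt_between' in Hy. unfold in01. lra.
Qed.

Lemma copula_is_derive_u_0 (C : R -> R -> R) (u : R) : is_copula C -> 0 < u < 1 ->
  is_derive (fun x => C x 0) u 0.
Proof.
  intros [Hb _] Hu. apply is_derive_ext_loc with (fun _ => 0).
  2: apply (is_derive_const (K := R_AbsRing) (V := R_NormedModule)).
  apply (filter_imp in01); [|apply locally_in01, Hu]. intros y Hy. symmetry. apply Hb, Hy.
Qed.

Lemma copula_is_derive_u_1 (C : R -> R -> R) (u : R) : is_copula C -> 0 < u < 1 ->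
  is_derive (fun x => C x 1) u 1.
Proof.
  intros [Hb _] Hu. apply is_derive_ext_loc with (fun x => x).
  2: exact (is_derive_id (K := R_AbsRing) _).
  apply (filter_imp in01); [|apply locally_in01, Hu]. intros y Hy. symmetry. apply Hb, Hy.
Qed.

Lemma C21_0 (C : R -> R -> R) (u : R) : is_copula C -> 0 < u < 1 ->
  ex_C21 C 0 u /\ C21 C 0 u = 0.
Proof.
  intros HC Hu. pose proof (copula_is_derive_u_0 C u HC Hu) as H.
  split; [eexists; exact H | exact (is_derive_unique _ _ _ H)].
Qed.

Lemma C21_1 (C : R -> R -> R) (u : R) : is_copula C -> 0 < u < 1 ->
  ex_C21 C 1 u /\ C21 C 1 u = 1.
Proof.
  intros HC Hu. pose proof (copula_is_derive_u_1 C u HC Hu) as H.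
  split; [eexists; exact H | exact (is_derive_unique _ _ _ H)].
Qed.

Lemma C12_0 (C : R -> R -> R) (v : R) : is_copula C -> 0 < v < 1 ->
  ex_C12 C 0 v /\ C12 C 0 v = 0.
Proof. intros HC. exact (C21_0 (swap_uv C) v (is_copula_swap_uv C HC)). Qed.

Lemma C12_1 (C : R -> R -> R) (v : R) : is_copula C -> 0 < v < 1 ->
  ex_C12 C 1 v /\ C12 C 1 v = 1.
Proof. intros HC. exact (C21_1 (swap_uv C) v (is_copula_swap_uv C HC)). Qed.

Lemma Derive_increment (f : R -> R) (x : R) : ex_derive f x ->
  forall e, 0 < e -> exists eta, 0 < eta /\
    forall h, Rabs h < eta -> Rabs (f (x + h) - f x - h * Derive f x) <= e * Rabs h.
Proof.
  intros Hd e He.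
  destruct (proj1 (is_derive_Reals _ _ _) (Derive_correct f x Hd) e He) as [eta Heta].
  exists eta. split; [apply cond_pos|]. intros h Hh.
  destruct (Req_dec h 0) as [->|Hh0].
  - rewrite Rplus_0_r, Rabs_R0, Rmult_0_l, Rminus_diag, Rminus_0_l, Ropp_0, Rabs_R0. lra.
  - specialize (Heta h Hh0 Hh).
    replace (f (x + h) - f x - h * Derive f x) with (h * ((f (x + h) - f x) / h - Derive f x))
      by (field; auto).
    rewrite Rabs_mult, Rmult_comm. apply Rmult_le_compat_r; [apply Rabs_pos | lra].
Qed.

(** * The window of the quantile dependence coefficient *)

Definition speed (s : bool) : R := if s then 1 else 0.

Lemma speed_bounds (s : bool) : 0 <= speed s <= 1.
Proof. destruct s; simpl; lra. Qed.

Lemma VC_strip_u (C : R -> R -> R) (u v1 v2 : R) (s : bool) :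
  (if s then ex_C21 C v1 u /\ ex_C21 C v2 u else True) ->
  forall e, 0 < e -> near0r (fun h =>
    let D := speed s * h * (C21 C v2 u - C21 C v1 u) in
    Rabs (VC C u (u + speed s * h) v1 v2 - D) <= e * h /\
    Rabs (VC C (u - speed s * h) u v1 v2 - D) <= e * h).
Proof.
  destruct s; simpl; intros Hd e He.
  - destruct Hd as [D1 D2].
    destruct (Derive_increment (fun x => C x v1) u D1 (e / 2) ltac:(lra)) as [eta1 [Heta1 H1]].
    destruct (Derive_increment (fun x => C x v2) u D2 (e / 2) ltac:(lra)) as [eta2 [Heta2 H2]].
    exists (Rmin eta1 eta2). split; [apply Rmin_glb_lt; auto|]. intros h Hh.
    pose proof (Rmin_l eta1 eta2). pose proof (Rmin_r eta1 eta2).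
    assert (Hp : Rabs h = h) by (apply Rabs_pos_eq; lra).
    assert (Hm : Rabs (- h) = h) by (rewrite Rabs_Ropp; auto).
    pose proof (H1 h ltac:(lra)) as P1. pose proof (H1 (- h) ltac:(lra)) as M1.
    pose proof (H2 h ltac:(lra)) as P2. pose proof (H2 (- h) ltac:(lra)) as M2.
    rewrite Hp in P1, P2. rewrite Hm in M1, M2.
    apply Rabs_le_between in P1, M1, P2, M2.
    replace (u - 1 * h) with (u + - h) by ring. rewrite Rmult_1_l.
    unfold VC, C21. cbv beta zeta in *. split; apply Rabs_le_between; lra.
  - exists 1. split; [lra|]. intros h Hh. cbv zeta.
    rewrite !Rmult_0_l, Rplus_0_r, !Rminus_0_r.
    replace (VC C u u v1 v2) with 0 by (unfold VC; ring).
    rewrite Rabs_R0. split; nra.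
Qed.

Lemma VC_strip_v (C : R -> R -> R) (u1 u2 v : R) (s : bool) :
  (if s then ex_C12 C u1 v /\ ex_C12 C u2 v else True) ->
  forall e, 0 < e -> near0r (fun h =>
    let D := speed s * h * (C12 C u2 v - C12 C u1 v) in
    Rabs (VC C u1 u2 v (v + speed s * h) - D) <= e * h /\
    Rabs (VC C u1 u2 (v - speed s * h) v - D) <= e * h).
Proof.
  intros Hd e He. generalize (VC_strip_u (swap_uv C) v u1 u2 s Hd e He).
  apply near0r_mono. intros h _ H. rewrite !VC_swap_uv in H. exact H.
Qed.

(* The four corner rectangles of the frame have nonnegative volume. *)
Lemma VC_frame (C : R -> R -> R) (a' a b b' c' c d d' : R) : is_copula C ->
  in01 a' -> in01 b' -> in01 c' -> in01 d' ->
  a' <= a <= b -> b <= b' -> c' <= c <= d -> d <= d' ->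
  VC C a b c d + VC C b b' c d + VC C a' a c d + VC C a b d d' + VC C a b c' c
    <= VC C a' b' c' d' /\
  VC C a' b' c' d'
    <= VC C a b c d + VC C b b' c' d' + VC C a' a c' d' + VC C a' b' d d' + VC C a' b' c' c.
Proof.
  intros [_ Hinc] Ha' Hb' Hc' Hd' Ha Hb Hc Hd. unfold in01 in *.
  pose proof (Hinc b b' d d' ltac:(lra) ltac:(lra) ltac:(lra) ltac:(lra) ltac:(lra) ltac:(lra)).
  pose proof (Hinc a' a d d' ltac:(lra) ltac:(lra) ltac:(lra) ltac:(lra) ltac:(lra) ltac:(lra)).
  pose proof (Hinc b b' c' c ltac:(lra) ltac:(lra) ltac:(lra) ltac:(lra) ltac:(lra) ltac:(lra)).
  pose proof (Hinc a' a c' c ltac:(lra) ltac:(lra) ltac:(lra) ltac:(lra) ltac:(lra) ltac:(lra)).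
  unfold VC in *. lra.
Qed.

Lemma posp_in01 (x : R) : x <= 1 -> in01 (posp x).
Proof.
  intros Hx. unfold in01, posp.
  destruct (Rle_dec x 0); [rewrite Rmax_right | rewrite Rmax_left]; lra.
Qed.

Lemma negm_in01 (x : R) : 0 <= x -> in01 (negm x).
Proof.
  intros Hx. unfold negm. pose proof (posp_in01 (1 - x) ltac:(lra)). unfold in01 in *. lra.
Qed.

Lemma posp_id (x : R) : 0 <= x -> posp x = x.
Proof. intros. unfold posp. rewrite Rmax_left; lra. Qed.
Lemma posp_nonpos (x : R) : x <= 0 -> posp x = 0.
Proof. intros. unfold posp. rewrite Rmax_right; lra. Qed.
Lemma negm_id (x : R) : x <= 1 -> negm x = x.
Proof. intros. unfold negm. rewrite posp_id; lra. Qed.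
Lemma negm_ge1 (x : R) : 1 <= x -> negm x = 1.
Proof. intros. unfold negm. rewrite posp_nonpos; lra. Qed.

(* For small [t], [posp (p - t)] and [negm (p + t)] are either [p - t] and [p + t] or
   stuck at [p] when [p] is an endpoint of [[0, 1]]; the flag [s] records which. *)
Definition edge_lo (p : R) (s : bool) (t : R) : R := if s then p - t else p.
Definition edge_hi (p : R) (s : bool) (t : R) : R := if s then p + t else p.

Lemma edge_lo_add (p x h : R) (s : bool) : edge_lo p s (x + h) = edge_lo p s x - speed s * h.
Proof. destruct s; simpl; ring. Qed.
Lemma edge_lo_sub (p x h : R) (s : bool) : edge_lo p s (x - h) = edge_lo p s x + speed s * h.
Proof. destruct s; simpl; ring. Qed.
Lemma edge_hi_add (p x h : R) (s : bool) : edge_hi p s (x + h) = edge_hi p s x + speed s * h.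
Proof. destruct s; simpl; ring. Qed.
Lemma edge_hi_sub (p x h : R) (s : bool) : edge_hi p s (x - h) = edge_hi p s x - speed s * h.
Proof. destruct s; simpl; ring. Qed.

Lemma edge_lo_lipschitz (p x y : R) (s : bool) :
  Rabs (edge_lo p s x - edge_lo p s y) <= Rabs (x - y).
Proof.
  destruct s; simpl.
  - replace (p - x - (p - y)) with (- (x - y)) by ring. rewrite Rabs_Ropp. lra.
  - rewrite Rminus_diag, Rabs_R0. apply Rabs_pos.
Qed.

Lemma edge_hi_lipschitz (p x y : R) (s : bool) :
  Rabs (edge_hi p s x - edge_hi p s y) <= Rabs (x - y).
Proof.
  destruct s; simpl.
  - replace (p + x - (p + y)) with (x - y) by ring. lra.
  - rewrite Rminus_diag, Rabs_R0. apply Rabs_pos.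
Qed.

Section Window.

Variables (C : R -> R -> R) (p q : R) (sl sr sb st : bool).

Definition rect_vol (t : R) : R :=
  VC C (edge_lo p sl t) (edge_hi p sr t) (edge_lo q sb t) (edge_hi q st t).

Definition rect_slope (t : R) : R :=
  let a := edge_lo p sl t in let b := edge_hi p sr t in
  let c := edge_lo q sb t in let d := edge_hi q st t in
  speed sl * (C21 C d a - C21 C c a) + speed sr * (C21 C d b - C21 C c b) +
  speed sb * (C12 C b c - C12 C a c) + speed st * (C12 C b d - C12 C a d).

Definition rect_derivable (t : R) : Prop :=
  let a := edge_lo p sl t in let b := edge_hi p sr t in
  let c := edge_lo q sb t in let d := edge_hi q st t in
  (if sl then ex_C21 C c a /\ ex_C21 C d a else True) /\
  (if sr then ex_C21 C c b /\ ex_C21 C d b else True) /\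
  (if sb then ex_C12 C a c /\ ex_C12 C b c else True) /\
  (if st then ex_C12 C a d /\ ex_C12 C b d else True).

Definition rect_in01 (d : R) : Prop :=
  forall t, 0 <= t <= d ->
  in01 (edge_lo p sl t) /\ in01 (edge_hi p sr t) /\ in01 (edge_lo q sb t) /\ in01 (edge_hi q st t).

Hypothesis HC : is_copula C.

Lemma rect_vol_0 : rect_vol 0 = 0.
Proof.
  unfold rect_vol.
  replace (edge_lo p sl 0) with p by (destruct sl; simpl; ring).
  replace (edge_hi p sr 0) with p by (destruct sr; simpl; ring).
  replace (edge_lo q sb 0) with q by (destruct sb; simpl; ring).
  replace (edge_hi q st 0) with q by (destruct st; simpl; ring).
  unfold VC. ring.
Qed.

Lemma rect_vol_lipschitz (d : R) : rect_in01 d -> lipschitz_on 8 0 d rect_vol.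
Proof.
  intros Hdom x y Hx Hy.
  destruct (Hdom x Hx) as (Ha & Hb & Hc & Hd). destruct (Hdom y Hy) as (Ha' & Hb' & Hc' & Hd').
  eapply Rle_trans; [apply VC_lipschitz; auto|].
  pose proof (edge_lo_lipschitz p x y sl). pose proof (edge_hi_lipschitz p x y sr).
  pose proof (edge_lo_lipschitz q x y sb). pose proof (edge_hi_lipschitz q x y st).
  lra.
Qed.

Lemma rect_vol_increments (d x e : R) :
  rect_in01 d -> 0 < x < d -> rect_derivable x -> 0 < e -> near0r (fun h =>
    (rect_slope x - e) * h <= rect_vol (x + h) - rect_vol x /\
    rect_vol x - rect_vol (x - h) <= (rect_slope x + e) * h).
Proof.
  intros Hdom Hx (Dl & Dr & Db & Dt) He.
  pose proof (VC_strip_u C _ _ _ sl Dl (e / 4) ltac:(lra)) as Sl.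
  pose proof (VC_strip_u C _ _ _ sr Dr (e / 4) ltac:(lra)) as Sr.
  pose proof (VC_strip_v C _ _ _ sb Db (e / 4) ltac:(lra)) as Sb.
  pose proof (VC_strip_v C _ _ _ st Dt (e / 4) ltac:(lra)) as St.
  pose proof (near0r_lt (Rmin x (d - x)) ltac:(apply Rmin_glb_lt; lra)) as Hsmall.
  generalize (near0r_and _ _ (near0r_and _ _ Sl Sr)
                (near0r_and _ _ (near0r_and _ _ Sb St) Hsmall)).
  apply near0r_mono. cbv zeta.
  intros h Hh [[[Sl1 Sl2] [Sr1 Sr2]] [[[Sb1 Sb2] [St1 St2]] Hhx]].
  pose proof (Rmin_l x (d - x)). pose proof (Rmin_r x (d - x)).
  apply Rabs_le_between in Sl1, Sl2, Sr1, Sr2, Sb1, Sb2, St1, St2.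
  destruct (Hdom x ltac:(lra)) as (Ia & Ib & Ic & Id).
  destruct (Hdom (x + h) ltac:(lra)) as (Ia1 & Ib1 & Ic1 & Id1).
  destruct (Hdom (x - h) ltac:(lra)) as (Ia2 & Ib2 & Ic2 & Id2).
  unfold rect_vol, rect_slope.
  rewrite ?edge_lo_add, ?edge_hi_add, ?edge_lo_sub, ?edge_hi_sub in *.
  pose proof (speed_bounds sl). pose proof (speed_bounds sr).
  pose proof (speed_bounds sb). pose proof (speed_bounds st).
  assert (0 <= speed sl * h /\ 0 <= speed sr * h /\ 0 <= speed sb * h /\ 0 <= speed st * h)
    as (? & ? & ? & ?) by (repeat split; apply Rmult_le_pos; lra).
  assert (edge_lo p sl x + speed sl * h <= edge_hi p sr x - speed sr * h /\
          edge_lo q sb x + speed sb * h <= edge_hi q st x - speed st * h) as [Hab Hcd].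
  { destruct sl, sr, sb, st; simpl; lra. }
  split.
  - destruct (VC_frame C (edge_lo p sl x - speed sl * h) (edge_lo p sl x)
      (edge_hi p sr x) (edge_hi p sr x + speed sr * h)
      (edge_lo q sb x - speed sb * h) (edge_lo q sb x)
      (edge_hi q st x) (edge_hi q st x + speed st * h)) as [Hframe _]; auto; try lra.
  - destruct (VC_frame C (edge_lo p sl x) (edge_lo p sl x + speed sl * h)
      (edge_hi p sr x - speed sr * h) (edge_hi p sr x)
      (edge_lo q sb x) (edge_lo q sb x + speed sb * h)
      (edge_hi q st x - speed st * h) (edge_hi q st x)) as [_ Hframe]; auto; try lra.
Qed.

Lemma rect_vol_dini (d x : R) : rect_in01 d -> 0 < x < d -> rect_derivable x ->
  right_dini_lb rect_vol (rect_slope x) x /\ left_dini_ub rect_vol (rect_slope x) x.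
Proof.
  intros Hdom Hx Hder.
  split; intros e He; generalize (rect_vol_increments d x e Hdom Hx Hder He);
    apply near0r_mono; intros h _ []; auto.
Qed.

Lemma lim0r_rect_vol_ratio (d L : R) :
  0 < d -> rect_in01 d -> (forall t, 0 < t < d -> rect_derivable t) ->
  lim0r rect_slope L -> lim0r (fun t => rect_vol t / t) L.
Proof.
  intros Hd Hdom Hder. apply (lim0r_ratio_of_dini _ _ 8 d L Hd rect_vol_0).
  - apply rect_vol_lipschitz, Hdom.
  - intros x Hx. apply (rect_vol_dini d); auto.
Qed.

Lemma qdc_of_rect_slope (L : R) :
  in01 p -> in01 q -> orb sl sr = true ->
  near0r (fun t => posp (p - t) = edge_lo p sl t /\ negm (p + t) = edge_hi p sr t) ->
  near0r (fun t => posp (q - t) = edge_lo q sb t /\ negm (q + t) = edge_hi q st t) ->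
  near0r rect_derivable -> lim0r rect_slope L ->
  qdc_is C p q (L / (speed sl + speed sr)).
Proof.
  intros Hp Hq Hs Hwp Hwq Hder Hlim.
  assert (Hk : 0 < speed sl + speed sr) by (destruct sl, sr; simpl in *; lra || discriminate).
  destruct (near0r_and _ _ (near0r_and _ _ Hwp Hwq) Hder) as [d [Hd Hnear]].
  assert (Hdom : rect_in01 (d / 2)).
  { intros t Ht. destruct (Req_dec t 0) as [->|Ht0].
    - destruct sl, sr, sb, st; simpl; unfold in01 in *; repeat split; lra.
    - destruct (Hnear t ltac:(lra)) as [[[<- <-] [<- <-]] _].
      unfold in01 in *. repeat split;
        solve [apply posp_in01; lra | apply negm_in01; lra]. }
  pose proof (lim0r_rect_vol_ratio (d / 2) L ltac:(lra) Hdom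
                (fun t Ht => proj2 (Hnear t ltac:(lra))) Hlim) as Hratio.
  replace (L / (speed sl + speed sr)) with (0 + / (speed sl + speed sr) * L) by (field; lra).
  apply (lim0r_ext_near (fun t => 0 + / (speed sl + speed sr) * (rect_vol t / t)));
    [apply lim0r_affine, Hratio |].
  exists d. split; auto. intros t Ht. destruct (Hnear t Ht) as [[[E1 E2] [E3 E4]] _].
  unfold lam_ratio, rect_vol. rewrite E1, E2, E3, E4.
  replace (edge_hi p sr t - edge_lo p sl t) with ((speed sl + speed sr) * t)
    by (destruct sl, sr; simpl; ring).
  field. lra.
Qed.

End Window.

Lemma near0r_window (p : R) : 0 < p < 1 -> near0r (fun t => 0 < p - t /\ p + t < 1).
Proof.
  intros Hp. exists (Rmin p (1 - p)). split; [apply Rmin_glb_lt; lra|].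
  intros t Ht. pose proof (Rmin_l p (1 - p)). pose proof (Rmin_r p (1 - p)). lra.
Qed.

Lemma window_interior (p : R) : 0 < p < 1 ->
  near0r (fun t => posp (p - t) = edge_lo p true t /\ negm (p + t) = edge_hi p true t).
Proof.
  intros Hp. generalize (near0r_window p Hp). apply near0r_mono.
  intros t Ht [H1 H2]. simpl. split; [apply posp_id | apply negm_id]; lra.
Qed.

Lemma window_0 :
  near0r (fun t => posp (0 - t) = edge_lo 0 false t /\ negm (0 + t) = edge_hi 0 true t).
Proof.
  exists 1. split; [lra|]. intros t Ht. simpl. split; [apply posp_nonpos | apply negm_id]; lra.
Qed.

Lemma window_1 :
  near0r (fun t => posp (1 - t) = edge_lo 1 true t /\ negm (1 + t) = edge_hi 1 false t).
Proof.
  exists 1. split; [lra|]. intros t Ht. simpl. split; [apply posp_id | apply negm_ge1]; lra.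
Qed.

Ltac unfold_window := cbv [rect_derivable rect_slope speed edge_lo edge_hi]; rewrite ?Rplus_0_l.

Section Cases.

Variables (C : R -> R -> R) (L : R).
Hypothesis HC : is_copula C.

Lemma qdc_interior (p q : R) : 0 < p < 1 -> 0 < q < 1 ->
  near0r (fun t =>
    ex_C21 C (q + t) (p + t) /\ ex_C21 C (q - t) (p + t) /\
    ex_C21 C (q + t) (p - t) /\ ex_C21 C (q - t) (p - t) /\
    ex_C12 C (p + t) (q + t) /\ ex_C12 C (p - t) (q + t) /\
    ex_C12 C (p + t) (q - t) /\ ex_C12 C (p - t) (q - t)) ->
  lim0r (fun t =>
    C21 C (q + t) (p + t) - C21 C (q - t) (p + t)
    + C21 C (q + t) (p - t) - C21 C (q - t) (p - t)
    + C12 C (p + t) (q + t) - C12 C (p - t) (q + t)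
    + C12 C (p + t) (q - t) - C12 C (p - t) (q - t)) L ->
  qdc_is C p q (L / 2).
Proof.
  intros Hp Hq Hder Hlim.
  replace (L / 2) with (L / (speed true + speed true)) by (simpl; field).
  apply (qdc_of_rect_slope C p q true true true true HC);
    auto using window_interior; try (unfold in01; lra).
  - generalize Hder. apply near0r_mono. intros t _ H. unfold_window. tauto.
  - apply (lim0r_ext_near _ _ L Hlim).
    exists 1. split; [lra|]. intros t _. unfold_window. ring.
Qed.

Lemma qdc_bottom (p : R) : 0 < p < 1 ->
  near0r (fun t =>
    ex_C21 C t (p + t) /\ ex_C21 C t (p - t) /\
    ex_C12 C (p + t) t /\ ex_C12 C (p - t) t) ->
  lim0r (fun t =>
    C21 C t (p + t) + C21 C t (p - t) + C12 C (p + t) t - C12 C (p - t) t) L ->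
  qdc_is C p 0 (L / 2).
Proof.
  intros Hp Hder Hlim.
  replace (L / 2) with (L / (speed true + speed true)) by (simpl; field).
  apply (qdc_of_rect_slope C p 0 true true false true HC);
    auto using window_interior, window_0; try (unfold in01; lra).
  - generalize (near0r_and _ _ Hder (near0r_window p Hp)). apply near0r_mono.
    intros t Ht [H Hw]. unfold_window.
    pose proof (C21_0 C (p - t) HC ltac:(lra)). pose proof (C21_0 C (p + t) HC ltac:(lra)).
    tauto.
  - apply (lim0r_ext_near _ _ L Hlim).
    generalize (near0r_window p Hp). apply near0r_mono. intros t Ht Hw. unfold_window.
    rewrite (proj2 (C21_0 C (p - t) HC ltac:(lra))), (proj2 (C21_0 C (p + t) HC ltac:(lra))).
    ring.
Qed.

Lemma qdc_top (p : R) : 0 < p < 1 ->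
  near0r (fun t =>
    ex_C21 C (1 - t) (p + t) /\ ex_C21 C (1 - t) (p - t) /\
    ex_C12 C (p + t) (1 - t) /\ ex_C12 C (p - t) (1 - t)) ->
  lim0r (fun t =>
    C21 C (1 - t) (p + t) + C21 C (1 - t) (p - t)
    - C12 C (p + t) (1 - t) + C12 C (p - t) (1 - t)) L ->
  qdc_is C p 1 (1 - L / 2).
Proof.
  intros Hp Hder Hlim.
  replace (1 - L / 2) with ((2 + -1 * L) / (speed true + speed true)) by (simpl; field).
  apply (qdc_of_rect_slope C p 1 true true true false HC);
    auto using window_interior, window_1; try (unfold in01; lra).
  - generalize (near0r_and _ _ Hder (near0r_window p Hp)). apply near0r_mono.
    intros t Ht [H Hw]. unfold_window.
    pose proof (C21_1 C (p - t) HC ltac:(lra)). pose proof (C21_1 C (p + t) HC ltac:(lra)).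
    tauto.
  - apply (lim0r_ext_near _ _ _ (lim0r_affine _ _ 2 (-1) Hlim)).
    generalize (near0r_window p Hp). apply near0r_mono. intros t Ht Hw. unfold_window.
    rewrite (proj2 (C21_1 C (p - t) HC ltac:(lra))), (proj2 (C21_1 C (p + t) HC ltac:(lra))).
    ring.
Qed.

Lemma qdc_left (q : R) : 0 < q < 1 ->
  near0r (fun t =>
    ex_C21 C (q + t) t /\ ex_C21 C (q - t) t /\
    ex_C12 C t (q + t) /\ ex_C12 C t (q - t)) ->
  lim0r (fun t =>
    C21 C (q + t) t - C21 C (q - t) t + C12 C t (q + t) + C12 C t (q - t)) L ->
  qdc_is C 0 q L.
Proof.
  intros Hq Hder Hlim.
  replace L with (L / (speed false + speed true)) by (simpl; field).
  apply (qdc_of_rect_slope C 0 q false true true true HC);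
    auto using window_interior, window_0; try (unfold in01; lra).
  - generalize (near0r_and _ _ Hder (near0r_window q Hq)). apply near0r_mono.
    intros t Ht [H Hw]. unfold_window.
    pose proof (C12_0 C (q - t) HC ltac:(lra)). pose proof (C12_0 C (q + t) HC ltac:(lra)).
    tauto.
  - apply (lim0r_ext_near _ _ L Hlim).
    generalize (near0r_window q Hq). apply near0r_mono. intros t Ht Hw. unfold_window.
    rewrite (proj2 (C12_0 C (q - t) HC ltac:(lra))), (proj2 (C12_0 C (q + t) HC ltac:(lra))).
    ring.
Qed.

Lemma qdc_right (q : R) : 0 < q < 1 ->
  near0r (fun t =>
    ex_C12 C (1 - t) (q + t) /\ ex_C12 C (1 - t) (q - t) /\
    ex_C21 C (q + t) (1 - t) /\ ex_C21 C (q - t) (1 - t)) ->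
  lim0r (fun t =>
    C12 C (1 - t) (q + t) + C12 C (1 - t) (q - t)
    - C21 C (q + t) (1 - t) + C21 C (q - t) (1 - t)) L ->
  qdc_is C 1 q (2 - L).
Proof.
  intros Hq Hder Hlim.
  replace (2 - L) with ((2 + -1 * L) / (speed true + speed false)) by (simpl; field).
  apply (qdc_of_rect_slope C 1 q true false true true HC);
    auto using window_interior, window_1; try (unfold in01; lra).
  - generalize (near0r_and _ _ Hder (near0r_window q Hq)). apply near0r_mono.
    intros t Ht [H Hw]. unfold_window.
    pose proof (C12_1 C (q - t) HC ltac:(lra)). pose proof (C12_1 C (q + t) HC ltac:(lra)).
    tauto.
  - apply (lim0r_ext_near _ _ _ (lim0r_affine _ _ 2 (-1) Hlim)).
    generalize (near0r_window q Hq). apply near0r_mono. intros t Ht Hw. unfold_window.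
    rewrite (proj2 (C12_1 C (q - t) HC ltac:(lra))), (proj2 (C12_1 C (q + t) HC ltac:(lra))).
    ring.
Qed.

Lemma qdc_top_left :
  near0r (fun t => ex_C21 C (1 - t) t /\ ex_C12 C t (1 - t)) ->
  lim0r (fun t => C21 C (1 - t) t - C12 C t (1 - t)) L ->
  qdc_is C 0 1 (1 - L).
Proof.
  intros Hder Hlim.
  replace (1 - L) with ((1 + -1 * L) / (speed false + speed true)) by (simpl; field).
  apply (qdc_of_rect_slope C 0 1 false true true false HC);
    auto using window_0, window_1; try (unfold in01; lra).
  - generalize (near0r_and _ _ Hder (near0r_lt 1 Rlt_0_1)). apply near0r_mono.
    intros t Ht [H Ht1]. unfold_window.
    pose proof (C21_1 C t HC ltac:(lra)). pose proof (C12_0 C (1 - t) HC ltac:(lra)).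
    tauto.
  - apply (lim0r_ext_near _ _ _ (lim0r_affine _ _ 1 (-1) Hlim)).
    generalize (near0r_lt 1 Rlt_0_1). apply near0r_mono. intros t Ht Ht1. unfold_window.
    rewrite (proj2 (C21_1 C t HC ltac:(lra))), (proj2 (C12_0 C (1 - t) HC ltac:(lra))).
    ring.
Qed.

Lemma qdc_bottom_right :
  near0r (fun t => ex_C12 C (1 - t) t /\ ex_C21 C t (1 - t)) ->
  lim0r (fun t => C12 C (1 - t) t - C21 C t (1 - t)) L ->
  qdc_is C 1 0 (1 - L).
Proof.
  intros Hder Hlim.
  replace (1 - L) with ((1 + -1 * L) / (speed true + speed false)) by (simpl; field).
  apply (qdc_of_rect_slope C 1 0 true false false true HC);
    auto using window_0, window_1; try (unfold in01; lra).
  - generalize (near0r_and _ _ Hder (near0r_lt 1 Rlt_0_1)). apply near0r_mono.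
    intros t Ht [H Ht1]. unfold_window.
    pose proof (C12_1 C t HC ltac:(lra)). pose proof (C21_0 C (1 - t) HC ltac:(lra)).
    tauto.
  - apply (lim0r_ext_near _ _ _ (lim0r_affine _ _ 1 (-1) Hlim)).
    generalize (near0r_lt 1 Rlt_0_1). apply near0r_mono. intros t Ht Ht1. unfold_window.
    rewrite (proj2 (C12_1 C t HC ltac:(lra))), (proj2 (C21_0 C (1 - t) HC ltac:(lra))).
    ring.
Qed.

End Cases.

Theorem corollary2 (C : R -> R -> R) (HC : is_copula C) :
  (* p, q in (0,1) *)
  (forall p q L, 0 < p < 1 -> 0 < q < 1 ->
     near0r (fun t =>
       ex_C21 C (q + t) (p + t) /\ ex_C21 C (q - t) (p + t) /\
       ex_C21 C (q + t) (p - t) /\ ex_C21 C (q - t) (p - t) /\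
       ex_C12 C (p + t) (q + t) /\ ex_C12 C (p - t) (q + t) /\
       ex_C12 C (p + t) (q - t) /\ ex_C12 C (p - t) (q - t)) ->
     lim0r (fun t =>
       C21 C (q + t) (p + t) - C21 C (q - t) (p + t)
       + C21 C (q + t) (p - t) - C21 C (q - t) (p - t)
       + C12 C (p + t) (q + t) - C12 C (p - t) (q + t)
       + C12 C (p + t) (q - t) - C12 C (p - t) (q - t)) L ->
     qdc_is C p q (L / 2)) /\
  (* p in (0,1), q = 0 *)
  (forall p L, 0 < p < 1 ->
     near0r (fun t =>
       ex_C21 C t (p + t) /\ ex_C21 C t (p - t) /\
       ex_C12 C (p + t) t /\ ex_C12 C (p - t) t) ->
     lim0r (fun t =>
       C21 C t (p + t) + C21 C t (p - t) + C12 C (p + t) t - C12 C (p - t) t) L ->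
     qdc_is C p 0 (L / 2)) /\
  (* p in (0,1), q = 1 *)
  (forall p L, 0 < p < 1 ->
     near0r (fun t =>
       ex_C21 C (1 - t) (p + t) /\ ex_C21 C (1 - t) (p - t) /\
       ex_C12 C (p + t) (1 - t) /\ ex_C12 C (p - t) (1 - t)) ->
     lim0r (fun t =>
       C21 C (1 - t) (p + t) + C21 C (1 - t) (p - t)
       - C12 C (p + t) (1 - t) + C12 C (p - t) (1 - t)) L ->
     qdc_is C p 1 (1 - L / 2)) /\
  (* p = 0, q in (0,1) *)
  (forall q L, 0 < q < 1 ->
     near0r (fun t =>
       ex_C21 C (q + t) t /\ ex_C21 C (q - t) t /\
       ex_C12 C t (q + t) /\ ex_C12 C t (q - t)) ->
     lim0r (fun t =>
       C21 C (q + t) t - C21 C (q - t) t + C12 C t (q + t) + C12 C t (q - t)) L ->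
     qdc_is C 0 q L) /\
  (* p = 1, q in (0,1) *)
  (forall q L, 0 < q < 1 ->
     near0r (fun t =>
       ex_C12 C (1 - t) (q + t) /\ ex_C12 C (1 - t) (q - t) /\
       ex_C21 C (q + t) (1 - t) /\ ex_C21 C (q - t) (1 - t)) ->
     lim0r (fun t =>
       C12 C (1 - t) (q + t) + C12 C (1 - t) (q - t)
       - C21 C (q + t) (1 - t) + C21 C (q - t) (1 - t)) L ->
     qdc_is C 1 q (2 - L)) /\
  (* p = 0, q = 1 *)
  (forall L,
     near0r (fun t => ex_C21 C (1 - t) t /\ ex_C12 C t (1 - t)) ->
     lim0r (fun t => C21 C (1 - t) t - C12 C t (1 - t)) L ->
     qdc_is C 0 1 (1 - L)) /\
  (* p = 1, q = 0 *)
  (forall L,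
     near0r (fun t => ex_C12 C (1 - t) t /\ ex_C21 C t (1 - t)) ->
     lim0r (fun t => C12 C (1 - t) t - C21 C t (1 - t)) L ->
     qdc_is C 1 0 (1 - L)).
Proof.
  repeat split; intros.
  - apply qdc_interior; auto.
  - apply qdc_bottom; auto.
  - apply qdc_top; auto.
  - apply qdc_left; auto.
  - apply qdc_right; auto.
  - apply qdc_top_left; auto.
  - apply qdc_bottom_right; auto.
Qed.
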